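(* Let $m, N$ be positive integers with $N \geq 2$, let $A \in \mathbb{R}^{m\times N}$ have columns $a_1,\dots,a_N \in \mathbb{R}^m$, and let $q = \log(N)$. Let $\|\cdot\|$ be a norm on $\mathbb{R}^m$ with dual norm $\|\cdot\|_*$, and let $S^{\|\cdot\|_*} = \{w \in \mathbb{R}^m : \|w\|_* = 1\}$. If, for some $D>0$, \[ \inf_{w \in S^{\|\cdot\|_*}} \Big( \frac{1}{N}\sum_{i=1}^N |\langle a_i, w\rangle|^q \Big)^{1/q} \geq \frac{1}{D}\sqrt{\log\Big(\frac{eN}{m}\Big)}, \] then $\frac{1}{\sqrt{m}} A$ fulfills the $\ell_1$-quotient property with constant $D$ relative to the norm $\|\cdot\|$.
   Context: All logarithms are natural. The dual norm is $\|w\|_* = \sup_{\|z\| \leq 1} |\langle w, z\rangle|$. A matrix $M \in \mathbb{R}^{m\times N}$ has the $\ell_1$-quotient property with constant $d$ relative to a norm $\|\cdot\|$ on $\mathbb{R}^m$ if for every $w \in \mathbb{R}^m$ there exists $u \in \mathbb{R}^N$ with $Mu = w$ and $\|u\|_1 \leq d\, s_*^{1/2}\|w\|$, where $s_* = m/\log(eN/m)$. *)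

From HB Require Import structures.
From mathcomp Require Import all_boot all_order all_algebra.
From mathcomp Require Import all_classical all_reals all_analysis.
Set Implicit Arguments. Unset Strict Implicit. Unset Printing Implicit Defensive.
Import Order.TTheory GRing.Theory Num.Theory.
Local Open Scope classical_set_scope.
Local Open Scope ring_scope.

Definition dotv (R : realType) (m : nat) (v w : 'cV[R]_m) : R :=
  \sum_(k < m) v k 0 * w k 0.

Definition is_norm (R : realType) (m : nat) (nrm : 'cV[R]_m -> R) : Prop :=
  [/\ forall x, 0 <= nrm x,
      forall x, nrm x = 0 -> x = 0,
      forall (a : R) x, nrm (a *: x) = `|a| * nrm x
    & forall x y, nrm (x + y) <= nrm x + nrm y].

Definition dual_norm (R : realType) (m : nat) (nrm : 'cV[R]_m -> R)
  (w : 'cV[R]_m) : R :=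
  sup [set `|dotv w z| | z in [set z | nrm z <= 1]].

Definition s_star (R : realType) (m N : nat) : R :=
  m%:R / ln (expR 1 * N%:R / m%:R).

Definition l1norm (R : realType) (N : nat) (u : 'cV[R]_N) : R :=
  \sum_(j < N) `|u j 0|.

Definition l1_quotient_property (R : realType) (m N : nat)
  (M : 'M[R]_(m, N)) (d : R) (nrm : 'cV[R]_m -> R) : Prop :=
  forall w : 'cV[R]_m, exists u : 'cV[R]_N,
    M *m u = w /\ l1norm u <= d * Num.sqrt (s_star R m N) * nrm w.

Definition col_moment (R : realType) (m N : nat) (A : 'M[R]_(m, N))
  (q : R) (w : 'cV[R]_m) : R :=
  powR (N%:R^-1 * \sum_(i < N) powR `|dotv (col i A) w| q) q^-1.

From HB Require Import structures.
From mathcomp Require Import all_boot all_order all_algebra.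
From mathcomp Require Import all_classical all_reals all_analysis.
From mathcomp Require Import ring lra.
Import Order.TTheory GRing.Theory Num.Theory.
Import numFieldNormedType.Exports.
Local Open Scope classical_set_scope.
Local Open Scope ring_scope.

(* Given w, minimise |w - M u|_2^2 over the l1-ball of radius t = nrm w / c, where
   M = A / sqrt m and c = sqrt (ln (eN/m) / m) / D.  If the residual r at a minimiser
   u0 were nonzero, first-order optimality at the vertices +-t e_j of the ball gives
   t |<col_j M, r>| <= <r, M u0>, while the moment hypothesis applied to r / |r|_*
   gives c |r|_* <= max_j |<col_j M, r>|.  Hence
   |<r, w>| <= |r|_* nrm w <= <r, M u0> < <r, r> + <r, M u0> = <r, w>,
   a contradiction, so M u0 = w.  The constant is finite because ln (eN/m) > 0:
   m <= eN, and eN is not an integer since e is irrational. *)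

Section expR1_irrational.
Variable R : realType.

Local Notation exp1_sum := (series (exp_coeff (1 : R))).

Lemma exp1_sumS n : exp1_sum n.+1 = exp1_sum n + (n`!%:R)^-1.
Proof. by rewrite /series /= big_nat_recr //= /exp_coeff /= expr1n mul1r. Qed.

Lemma fact_mul_exp1_sum n : exists K : nat, n`!%:R * exp1_sum n.+1 = K%:R.
Proof.
elim: n => [|n [K IH]].
  by exists 1%N; rewrite exp1_sumS /series /= big_geq // fact0 add0r invr1 mulr1.
exists (n.+1 * K + 1)%N.
have fact_neq0 : (n.+1)`!%:R != 0 :> R by rewrite pnatr_eq0 -lt0n fact_gt0.
by rewrite exp1_sumS mulrDr mulfV // factS natrM -mulrA IH natrD natrM.
Qed.

Lemma exp1_sum_nondecreasing : nondecreasing_seq exp1_sum.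
Proof.
move=> a b ab; rewrite /series /= (big_cat_nat (leq0n a) ab) /= lerDl.
by apply: sumr_ge0 => i _; rewrite /exp_coeff /= expr1n mul1r invr_ge0.
Qed.

Lemma exp1_sum_le_expR1 n : exp1_sum n <= expR 1.
Proof.
exact: (nondecreasing_cvgn_le exp1_sum_nondecreasing (is_cvg_series_exp_coeff 1)).
Qed.

Lemma fact_mul_3expn_le n j : (2 <= n)%N -> (n`! * 3 ^ j.+1 <= (n + j.+1)`!)%N.
Proof.
move=> n2; elim: j => [|j IH].
  by rewrite expn1 addn1 factS mulnC leq_mul2r ltnS n2 orbT.
rewrite expnS addnS factS mulnCA mulnC [leqRHS]mulnC leq_mul //.
by rewrite ltnS (leq_trans n2) ?leq_addr.
Qed.

(* Since [n >= 2], each further term is at most a third of the previous one. *)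
Lemma fact_mul_exp1_sum_tail n j : (2 <= n)%N ->
  n`!%:R * (exp1_sum (n.+1 + j)%N - exp1_sum n.+1) <= (1 - 3^-1 ^+ j) / 2.
Proof.
move=> n2; elim: j => [|j IH]; first by rewrite addn0 subrr mulr0 expr0 subrr mul0r.
rewrite addnS exp1_sumS addrAC mulrDr.
have term_le : n`!%:R * ((n.+1 + j)%N`!%:R)^-1 <= 3^-1 ^+ j.+1 :> R.
  rewrite exprVn ler_pdivrMr ?ltr0n ?fact_gt0 // mulrC ler_pdivlMr ?exprn_gt0 //.
  by rewrite -natrX -natrM ler_nat addSnnS fact_mul_3expn_le.
apply: le_trans (lerD IH term_le) _.
by rewrite exprS le_eqVlt; apply/orP; left; apply/eqP; field.
Qed.

Lemma expR1_le_exp1_sum n : (2 <= n)%N ->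
  expR 1 <= exp1_sum n.+1 + (n`!%:R)^-1 / 2.
Proof.
move=> n2; apply: limr_le; first exact: is_cvg_series_exp_coeff.
near=> k; have nk : (n.+1 <= k)%N by near: k; exact: nbhs_infty_ge.
rewrite -(subnKC nk) -lerBlDl.
have := @fact_mul_exp1_sum_tail n (k - n.+1) n2.
rewrite -ler_pdivlMl ?ltr0n ?fact_gt0 // => /le_trans; apply.
have : 0 <= 3^-1 ^+ (k - n.+1) :> R by rewrite exprn_ge0.
by rewrite ler_pM2l ?invr_gt0 ?ltr0n ?fact_gt0 //; lra.
Unshelve. all: by end_near.
Qed.

(* [n`! * expR 1] lies strictly between the integer [n`! * exp1_sum n.+1]
   and that integer plus 1/2. *)
Lemma fact_mul_expR1_not_nat n (p : nat) : (2 <= n)%N -> n`!%:R * expR 1 != p%:R :> R.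
Proof.
move=> n2; apply/eqP => np; have [K HK] := fact_mul_exp1_sum n.
have fact_gt0' : 0 < n`!%:R :> R by rewrite ltr0n fact_gt0.
have : K%:R < p%:R :> R.
  rewrite -np -HK ltr_pM2l //; apply: lt_le_trans (exp1_sum_le_expR1 n.+2).
  by rewrite (exp1_sumS n.+1) ltrDl invr_gt0 ltr0n fact_gt0.
have : p%:R <= K%:R + 2^-1 :> R.
  rewrite -np -HK -ler_pdivlMl // mulrDr mulrA mulVf ?gt_eqF // mul1r.
  exact: expR1_le_exp1_sum.
rewrite ltr_nat -(ler_nat R) => p_le /le_trans /(_ p_le).
by rewrite -addn1 natrD lerD2l; lra.
Qed.

Lemma expR1_mul_nat_neq_nat (p q : nat) : (0 < q)%N -> expR 1 * q%:R != p%:R :> R.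
Proof.
case: q => // q _; apply/eqP => epq.
have /eqP := @fact_mul_expR1_not_nat q.+2 (q.+2 * p * q`!) isT; apply.
by rewrite !factS !natrM -epq; ring.
Qed.
End expR1_irrational.

Lemma continuous_of_lipschitz (R : realType) (T : normedModType R) (f : T -> R) k :
  (forall x y, `|f x - f y| <= k * `|x - y|) -> continuous f.
Proof.
move=> f_lip x; apply/cvgrPdist_lt => e e0.
have k1_gt0 : 0 < `|k| + 1 by rewrite ltr_pwDr.
apply: filterS (near_ball x _ (divr_gt0 e0 k1_gt0)) => y; rewrite -ball_normE /= => xy.
apply: le_lt_trans (f_lip x y) _; apply: le_lt_trans (_ : _ <= (`|k| + 1) * `|x - y|) _.
  by rewrite ler_wpM2r // (le_trans (ler_norm k)) ?lerDl.
by rewrite mulrC -ltr_pdivlMr.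
Qed.

Lemma mx_coord_le_norm {R : realType} {p q : nat} (x : 'M[R]_(p, q)) i j : `|x i j| <= `|x|.
Proof. by rewrite [leRHS]/Num.norm /= mx_normrE; apply/bigmax_geP; right; exists (i, j). Qed.

Section norm.
Context {R : realType} {m : nat} {nrm : 'cV[R]_m -> R}.
Hypothesis nrmP : is_norm nrm.

Lemma nrm_ge0 z : 0 <= nrm z. Proof. by case: nrmP. Qed.
Lemma nrm_eq0 z : nrm z = 0 -> z = 0. Proof. by case: nrmP => _ h _ _; apply: h. Qed.
Lemma nrmZ a z : nrm (a *: z) = `|a| * nrm z. Proof. by case: nrmP. Qed.
Lemma nrmD x y : nrm (x + y) <= nrm x + nrm y. Proof. by case: nrmP. Qed.

Lemma nrm0 : nrm 0 = 0.
Proof. by rewrite -(scale0r 0) nrmZ normr0 mul0r. Qed.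

Lemma nrm_gt0 z : z != 0 -> 0 < nrm z.
Proof. by move=> z0; rewrite lt_neqAle nrm_ge0 andbT; apply: contra z0 => /eqP/esym/nrm_eq0->. Qed.

Lemma nrmN z : nrm (- z) = nrm z.
Proof. by rewrite -scaleN1r nrmZ normrN normr1 mul1r. Qed.

Lemma nrm_sum (I : Type) (r : seq I) (P : pred I) (F : I -> 'cV[R]_m) :
  nrm (\sum_(i <- r | P i) F i) <= \sum_(i <- r | P i) nrm (F i).
Proof.
apply: (big_ind2 (fun a b => nrm a <= b)); first by rewrite nrm0.
  by move=> x1 x2 y1 y2 h1 h2; apply: le_trans (nrmD _ _) (lerD h1 h2).
by [].
Qed.

Lemma nrm_dist x y : `|nrm x - nrm y| <= nrm (x - y).
Proof.
rewrite ler_distl; apply/andP; split.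
  have := nrmD x (y - x); rewrite [x + _]addrC subrK -opprB nrmN.
  by rewrite lerBlDr addrC.
by have := nrmD y (x - y); rewrite [y + _]addrC subrK.
Qed.

Lemma nrm_continuous : continuous (fun x : 'rV[R]_m => nrm x^T).
Proof.
apply: (@continuous_of_lipschitz _ _ _ (\sum_k nrm (delta_mx k 0))) => x y.
apply: le_trans (nrm_dist _ _) _; rewrite -linearB /= {1}(matrix_sum_delta (x - y)^T).
apply: le_trans (nrm_sum _ _ _ _) _; rewrite mulr_suml; apply: ler_sum => k _.
by rewrite big_ord1 nrmZ mulrC ler_wpM2l ?nrm_ge0 // mxE mx_coord_le_norm.
Qed.

(* [c] is the inverse of the minimum of [nrm] on the compact unit sphere of the sup norm. *)
Lemma coord_le_nrm : exists2 c : R, 0 < c & forall (z : 'cV[R]_m) k, `|z k 0| <= c * nrm z.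
Proof.
have [m0|m_gt0] := posnP m.
  by exists 1 => // z k; have := leq_trans (ltn_ord k) (eq_leq m0).
pose S := [set x : 'rV[R]_m | `|x| = 1].
have S_compact : compact S.
  apply: bounded_closed_compact.
    by exists 1; split=> // M M1 x; rewrite /S /= => ->; apply: ltW.
  have -> : S = Num.norm @^-1` [set x : R | x = 1] by [].
  apply: preimage_closed; last exact: closed_eq.
  by move=> x _; apply: norm_continuous.
have S0 : S !=set0.
  pose v : 'rV[R]_m := const_mx 1.
  have v0 : `|v| != 0.
    rewrite normr_eq0; apply/eqP => /matrixP /(_ 0 (Ordinal m_gt0)).
    by rewrite !mxE => /eqP; rewrite oner_eq0.
  by exists (`|v|^-1 *: v); rewrite /S /= normrZ normrV ?unitfE // normr_id mulVf.
have [x0 Sx0 x0_min] := EVT_min_rV S0 S_compact (continuous_subspaceT nrm_continuous).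
have nx0_gt0 : 0 < nrm x0^T.
  apply: nrm_gt0; apply/eqP => /(congr1 trmx); rewrite trmxK trmx0 => x00.
  by move: Sx0; rewrite inE /S /= x00 normr0 => /eqP; rewrite eq_sym oner_eq0.
exists (nrm x0^T)^-1; first by rewrite invr_gt0.
move=> z k; have [->|z0] := eqVneq z 0; first by rewrite mxE normr0 nrm0 mulr0.
have zT_gt0 : 0 < `|z^T| by rewrite normr_gt0 -(inj_eq (@trmx_inj _ _ _)) trmxK trmx0.
have : nrm x0^T <= nrm (`|z^T|^-1 *: z^T)^T.
  by apply: x0_min; rewrite inE /S /= normrZ normrV ?unitfE ?gt_eqF // normr_id mulVf ?gt_eqF.
rewrite linearZ /= trmxK nrmZ normrV ?unitfE ?gt_eqF // normr_id ler_pdivlMl // => nz.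
apply: le_trans (_ : `|z^T| <= _); first by have := mx_coord_le_norm z^T 0 k; rewrite mxE.
by rewrite ler_pdivlMl // mulrC.
Qed.
End norm.

Section dotv.
Context {R : realType} {m : nat}.
Implicit Types (u v w : 'cV[R]_m).

Lemma dotvC u v : dotv u v = dotv v u.
Proof. by apply: eq_bigr => k _; rewrite mulrC. Qed.

Lemma dotvDr u v w : dotv u (v + w) = dotv u v + dotv u w.
Proof. by rewrite /dotv -big_split; apply: eq_bigr => k _; rewrite mxE mulrDr. Qed.

Lemma dotvZr a u v : dotv u (a *: v) = a * dotv u v.
Proof. by rewrite /dotv mulr_sumr; apply: eq_bigr => k _; rewrite mxE mulrCA. Qed.

Lemma dotvBr u v w : dotv u (v - w) = dotv u v - dotv u w.
Proof. by rewrite dotvDr -scaleN1r dotvZr mulN1r. Qed.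

Lemma dotvZl a u v : dotv (a *: u) v = a * dotv u v.
Proof. by rewrite dotvC dotvZr dotvC. Qed.

Lemma dotv0r u : dotv u 0 = 0.
Proof. by rewrite -(scale0r 0) dotvZr mul0r. Qed.

Lemma dotvvBZ u v s :
  dotv (u - s *: v) (u - s *: v) = dotv u u - 2 * s * dotv u v + s ^+ 2 * dotv v v.
Proof.
rewrite !dotvBr !dotvZr [dotv (u - _) u]dotvC [dotv (u - _) v]dotvC.
by rewrite !dotvBr !dotvZr (dotvC v u); ring.
Qed.

Lemma dotvv_ge0 u : 0 <= dotv u u.
Proof. by apply: sumr_ge0 => k _; rewrite -expr2 sqr_ge0. Qed.

Lemma dotvv_gt0 u : u != 0 -> 0 < dotv u u.
Proof.
move=> u0; have [k uk] : exists k, u k 0 != 0.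
  apply/existsP; apply: contraNT u0 => /existsPn u0; apply/eqP/matrixP => i j.
  by rewrite mxE (ord1 j); apply/eqP/negPn/u0.
rewrite /dotv (bigD1 k) //= -expr2; apply: lt_le_trans (_ : 0 < u k 0 ^+ 2) _.
  by rewrite exprn_even_gt0 // uk orbT.
by rewrite lerDl; apply: sumr_ge0 => i _; rewrite -expr2 sqr_ge0.
Qed.
End dotv.

Section dual_norm.
Context {R : realType} {m : nat} {nrm : 'cV[R]_m -> R}.
Hypothesis nrmP : is_norm nrm.

Let dual_set r := [set `|dotv r z| | z in [set z | nrm z <= 1]].

Let dual_set_ubound r : has_ubound (dual_set r).
Proof.
have [c c_gt0 coord_le] := coord_le_nrm nrmP.
exists (c * \sum_k `|r k 0|) => _ [z /= z_le1 <-].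
apply: le_trans (ler_norm_sum _ _ _) _; rewrite mulr_sumr; apply: ler_sum => k _.
rewrite normrM mulrC ler_wpM2r //; apply: le_trans (coord_le z k) _.
exact: ler_piMr (ltW c_gt0) z_le1.
Qed.

Let dual_set_le r z : nrm z <= 1 -> `|dotv r z| <= dual_norm nrm r.
Proof. by move=> z_le1; apply: (ub_le_sup (dual_set_ubound r)); exists z. Qed.

Lemma dotv_le_dual_norm r w : `|dotv r w| <= dual_norm nrm r * nrm w.
Proof.
have [->|w0] := eqVneq w 0; first by rewrite dotv0r normr0 nrm0 // mulr0.
have nw_gt0 := nrm_gt0 nrmP w w0.
have := @dual_set_le r ((nrm w)^-1 *: w).
rewrite nrmZ // dotvZr normrM ger0_norm ?invr_ge0 ?nrm_ge0 // mulVf ?gt_eqF //.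
by rewrite ler_pdivrMl // mulrC => ->.
Qed.

Lemma dual_norm_gt0 r : r != 0 -> 0 < dual_norm nrm r.
Proof.
move=> r0; have := dotv_le_dual_norm r r.
rewrite ger0_norm ?dotvv_ge0 //; apply: contraTlt => dual_le0; rewrite -ltNge.
apply: le_lt_trans (mulr_le0_ge0 dual_le0 (nrm_ge0 nrmP r)) _.
exact: dotvv_gt0.
Qed.

Lemma dual_normZ a r : 0 < a -> dual_norm nrm (a *: r) = a * dual_norm nrm r.
Proof.
suff dual_normZ_le b s : 0 < b -> dual_norm nrm (b *: s) <= b * dual_norm nrm s.
  move=> a_gt0; apply/le_anti; rewrite dual_normZ_le //=.
  have := dual_normZ_le a^-1 (a *: r).
  by rewrite invr_gt0 scalerA mulVf ?gt_eqF // scale1r ler_pdivlMl // => ->.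
move=> b_gt0; apply: ge_sup; first by exists 0, 0; rewrite /= ?(nrm0 nrmP) ?dotv0r ?normr0 ?ler01.
move=> _ [z /= z_le1 <-]; rewrite dotvZl normrM gtr0_norm // ler_pM2l //.
exact: dual_set_le.
Qed.
End dual_norm.

Lemma le0_of_forall_le_mul (R : realFieldType) (a b : R) :
  (forall s, 0 < s -> s <= 1 -> a <= s * b) -> a <= 0.
Proof.
move=> a_le; rewrite leNgt; apply/negP => a_gt0.
have a_le_b : a <= b by rewrite -[b]mul1r a_le ?ltr01.
have b_gt0 : 0 < b := lt_le_trans a_gt0 a_le_b.
have s_le1 : a / (2 * b) <= 1 by rewrite ler_pdivrMr ?mulr_gt0 //; lra.
have := a_le _ (divr_gt0 a_gt0 (mulr_gt0 (ltr0Sn _ 1) b_gt0)) s_le1.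
have -> : a / (2 * b) * b = a / 2 by field; rewrite gt_eqF.
lra.
Qed.

Lemma continuous_sum (R : realType) (T : topologicalType) (n : nat) (F : 'I_n -> T -> R) :
  (forall i, continuous (F i)) -> continuous (fun x => \sum_i F i x).
Proof. by move=> F_cont; apply: continuous_big => [|i _]; [apply: add_continuous | apply: F_cont]. Qed.

Section l1norm.
Context {R : realType} {N : nat}.
Implicit Types (u v : 'cV[R]_N).

Lemma l1normD u v : l1norm (u + v) <= l1norm u + l1norm v.
Proof. by rewrite -big_split; apply: ler_sum => j _; rewrite mxE ler_normD. Qed.

Lemma l1norm0 : l1norm (0 : 'cV[R]_N) = 0.
Proof. by rewrite /l1norm big1 // => j _; rewrite mxE normr0. Qed.

Lemma l1normZ a u : l1norm (a *: u) = `|a| * l1norm u.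
Proof. by rewrite mulr_sumr; apply: eq_bigr => j _; rewrite mxE normrM. Qed.

Lemma l1norm_delta j : l1norm (delta_mx j 0 : 'cV[R]_N) = 1.
Proof.
rewrite /l1norm (bigD1 j) //= big1 => [|i ij]; first by rewrite mxE !eqxx normr1 addr0.
by rewrite mxE (negbTE ij) normr0.
Qed.

Lemma l1norm_convex s u v : 0 <= s <= 1 ->
  l1norm (u + s *: (v - u)) <= (1 - s) * l1norm u + s * l1norm v.
Proof.
case/andP => s_ge0 s_le1; have -> : u + s *: (v - u) = (1 - s) *: u + s *: v.
  by rewrite scalerBr scalerBl scale1r addrA addrAC.
apply: le_trans (l1normD _ _) _.
by rewrite !l1normZ ger0_norm ?subr_ge0 // ger0_norm.
Qed.
End l1norm.

Definition max_col_dot {R : realType} {m N : nat} (M : 'M[R]_(m, N)) (r : 'cV[R]_m) : R :=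
  \big[Num.max/0]_j `|dotv (col j M) r|.

Section max_col_dot.
Context {R : realType} {m N : nat}.
Implicit Types (M : 'M[R]_(m, N)) (r : 'cV[R]_m).

Let bigmax_pM (a : R) (F : 'I_N -> R) : 0 <= a ->
  \big[Num.max/0]_j (a * F j) = a * \big[Num.max/0]_j F j.
Proof. by move=> a_ge0; rewrite (big_endo (fun x => a * x)) ?mulr0 // => x y; rewrite maxr_pMr. Qed.

Lemma max_col_dotZl a M r : 0 <= a -> max_col_dot (a *: M) r = a * max_col_dot M r.
Proof.
move=> a_ge0; rewrite -bigmax_pM //; apply: eq_bigr => j _.
have -> : col j (a *: M) = a *: col j M by apply/matrixP => i k; rewrite !mxE.
by rewrite dotvZl normrM ger0_norm.
Qed.

Lemma max_col_dotZr a M r : 0 <= a -> max_col_dot M (a *: r) = a * max_col_dot M r.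
Proof.
by move=> a_ge0; rewrite -bigmax_pM //; apply: eq_bigr => j _; rewrite dotvZr normrM ger0_norm.
Qed.

Lemma max_col_dot_ge0 M r : 0 <= max_col_dot M r.
Proof. exact: bigmax_ge_id. Qed.

Lemma le_max_col_dot M r j : `|dotv (col j M) r| <= max_col_dot M r.
Proof. exact: le_bigmax. Qed.

Lemma max_col_dot_le M r y : 0 <= y ->
  (forall j, `|dotv (col j M) r| <= y) -> max_col_dot M r <= y.
Proof. by move=> y_ge0 le_y; apply: bigmax_le. Qed.
End max_col_dot.

Section l1_ball_least_squares.
Context {R : realType} {m N : nat} (M : 'M[R]_(m, N)) (w : 'cV[R]_m).

Let sqres (u : 'cV[R]_N) := dotv (w - M *m u) (w - M *m u).

(* [bounded_closed_compact] is stated for row vectors, so the minimisation runs over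
   transposes. *)
Let l1norm_tr_continuous : continuous (fun v : 'rV[R]_N => l1norm v^T).
Proof.
have -> : (fun v : 'rV[R]_N => l1norm v^T) = fun v => \sum_j `|v 0 j|.
  by apply/funext => v; apply: eq_bigr => j _; rewrite mxE.
apply: continuous_sum => j v.
by apply: continuous_comp; [apply: coord_continuous | apply: norm_continuous].
Qed.

Let sqres_tr_continuous : continuous (fun v : 'rV[R]_N => sqres v^T).
Proof.
pose res k (v : 'rV[R]_N) := w k 0 - \sum_j M k j * v 0 j.
have -> : (fun v : 'rV[R]_N => sqres v^T) = fun v => \sum_k res k v * res k v.
  apply/funext => v; apply: eq_bigr => k _.
  suff -> : (w - M *m v^T) k 0 = res k v by [].
  by rewrite !mxE; congr (_ - _); apply: eq_bigr => j _; rewrite mxE.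
have res_continuous k : continuous (res k).
  move=> v; apply: continuousB; first exact: cst_continuous.
  apply: continuous_sum => j y.
  by apply: continuousM; [apply: cst_continuous | apply: coord_continuous].
by apply: continuous_sum => k v; apply: continuousM; apply: res_continuous.
Qed.

Let l1_ball_tr_compact t : compact [set v : 'rV[R]_N | l1norm v^T <= t].
Proof.
apply: bounded_closed_compact.
  exists t; split; first exact: num_real.
  move=> y /ltW t_le_y v v_le; apply: le_trans _ t_le_y.
  rewrite /Num.norm /= mx_normrE; apply: bigmax_le => [|[i j] _] /=.
    by apply: le_trans _ v_le; apply: sumr_ge0.
  rewrite (ord1 i); apply: le_trans _ v_le.
  by rewrite /l1norm (bigD1 j) //= mxE lerDl sumr_ge0.
have -> : [set v : 'rV[R]_N | l1norm v^T <= t] = (fun v => l1norm v^T) @^-1` [set x | x <= t].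
  by [].
apply: preimage_closed; last exact: closed_le.
by move=> v _; apply: l1norm_tr_continuous.
Qed.

Lemma exists_l1_ball_argmin_sqres t : 0 <= t ->
  exists2 u0, l1norm u0 <= t & forall u, l1norm u <= t -> sqres u0 <= sqres u.
Proof.
move=> t_ge0; have ball0 : [set v : 'rV[R]_N | l1norm v^T <= t] !=set0.
  by exists 0; rewrite /= trmx0 l1norm0.
have [v0 v0_in v0_min] := EVT_min_rV ball0 (l1_ball_tr_compact t)
  (continuous_subspaceT sqres_tr_continuous).
exists v0^T; first by move: v0_in; rewrite inE.
by move=> u u_le; rewrite -[u]trmxK; apply: v0_min; rewrite inE /= trmxK.
Qed.

Section argmin.
Context {t : R} {u0 : 'cV[R]_N}.
Hypotheses (u0_le : l1norm u0 <= t)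
  (u0_min : forall u, l1norm u <= t -> sqres u0 <= sqres u).
Let r := w - M *m u0.

(* The residual cannot decrease along the segment from [u0] to [u]; expanding the square
   at small steps gives this first-order condition. *)
Lemma l1_ball_argmin_sqres_opt u : l1norm u <= t -> dotv r (M *m u) <= dotv r (M *m u0).
Proof.
move=> u_le; rewrite -subr_le0 -dotvBr -mulmxBr; set d := M *m (u - u0).
apply: (@le0_of_forall_le_mul _ _ (dotv d d / 2)) => s s_gt0 s_le1.
have us_le : l1norm (u0 + s *: (u - u0)) <= t.
  have s01 : 0 <= s <= 1 by rewrite (ltW s_gt0) s_le1.
  apply: le_trans (l1norm_convex _ _ _ s01) _.
  have one_s_ge0 : 0 <= 1 - s by rewrite subr_ge0.
  apply: le_trans (lerD (ler_wpM2l one_s_ge0 u0_le) (ler_wpM2l (ltW s_gt0) u_le)) _.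
  by rewrite -mulrDl subrK mul1r.
have := u0_min _ us_le; rewrite /sqres mulmxDr -scalemxAr -/d opprD addrA -/r dotvvBZ.
move=> opt_s; rewrite -(ler_pM2l s_gt0); nra.
Qed.

Lemma max_col_dot_le_argmin : 0 <= t -> t * max_col_dot M r <= dotv r (M *m u0).
Proof.
move=> t_ge0; have P_ge0 : 0 <= dotv r (M *m u0).
  by have := @l1_ball_argmin_sqres_opt 0; rewrite mulmx0 dotv0r l1norm0; apply.
rewrite -max_col_dotZr //; apply: max_col_dot_le => // j.
have opt_j e : `|e| = 1 -> e * dotv (col j M) (t *: r) <= dotv r (M *m u0).
  move=> e1; have := @l1_ball_argmin_sqres_opt (e * t *: delta_mx j 0).
  rewrite l1normZ l1norm_delta normrM e1 mul1r ger0_norm // mulr1 => /(_ (lexx t)).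
  by rewrite -scalemxAr -colE (dotvZr (e * t)) (dotvZr t) dotvC mulrA.
rewrite ler_norml lerNl -mulN1r opt_j ?normrN ?normr1 //.
by rewrite -[X in X <= _]mul1r opt_j ?normr1.
Qed.
End argmin.
End l1_ball_least_squares.

Lemma l1_quotient_of_dual_bound {R : realType} {m N : nat} {M : 'M[R]_(m, N)}
    {nrm : 'cV[R]_m -> R} {c : R} :
  is_norm nrm -> 0 < c ->
  (forall r, r != 0 -> c * dual_norm nrm r <= max_col_dot M r) ->
  forall w, exists u, M *m u = w /\ l1norm u <= c^-1 * nrm w.
Proof.
move=> nrmP c_gt0 dual_le w.
have [->|w0] := eqVneq w 0; first by exists 0; rewrite mulmx0 l1norm0 (nrm0 nrmP) mulr0.
set t := c^-1 * nrm w; have t_gt0 : 0 < t by rewrite mulr_gt0 ?invr_gt0 ?(nrm_gt0 nrmP).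
have [u0 u0_le u0_min] := exists_l1_ball_argmin_sqres M w _ (ltW t_gt0).
exists u0; split => //; set r := w - M *m u0.
have [/eqP|r0] := eqVneq r 0; first by rewrite subr_eq0 => /eqP.
exfalso; set P := dotv r (M *m u0).
have dual_r_le : dual_norm nrm r * nrm w <= P.
  apply: le_trans (max_col_dot_le_argmin M w u0_le u0_min (ltW t_gt0)).
  rewrite /t [X in _ <= X]mulrAC ler_pM2r ?(nrm_gt0 nrmP) // ler_pdivlMl //.
  exact: dual_le.
have rw : dotv r w = dotv r r + P by rewrite -[in LHS](subrK (M *m u0) w) dotvDr.
have := dotv_le_dual_norm nrmP r w; have := ler_norm (dotv r w); have := dotvv_gt0 _ r0.
lra.
Qed.

Lemma powR_mean_le (R : realType) (n : nat) (x : 'I_n -> R) (q X : R) :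
  0 < q -> 0 <= X -> (forall i, 0 <= x i <= X) ->
  powR (n%:R^-1 * \sum_i powR (x i) q) q^-1 <= X.
Proof.
move=> q_gt0 X_ge0 x_bnd.
have mean_le : n%:R^-1 * \sum_i powR (x i) q <= powR X q.
  apply: le_trans (_ : n%:R^-1 * (n%:R * powR X q) <= _).
    rewrite ler_wpM2l ?invr_ge0 //.
    have -> : n%:R * powR X q = \sum_(i < n) powR X q by rewrite sumr_const card_ord mulr_natl.
    apply: ler_sum => i _; case/andP: (x_bnd i) => xi_ge0 xi_le.
    by apply: (ge0_ler_powR (ltW q_gt0)); rewrite ?nnegrE.
  have [->|n_gt0] := posnP n; first by rewrite invr0 mul0r powR_ge0.
  by rewrite mulrA mulVf ?mul1r // pnatr_eq0 -lt0n.
have mean_ge0 : 0 <= n%:R^-1 * \sum_i powR (x i) q.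
  by rewrite mulr_ge0 ?invr_ge0 // sumr_ge0 // => i _; apply: powR_ge0.
have qV_ge0 : 0 <= q^-1 by rewrite invr_ge0 ltW.
apply: le_trans (ge0_ler_powR qV_ge0 _ _ mean_le) _; rewrite ?nnegrE ?powR_ge0 //=.
by rewrite -powRrM mulfV ?gt_eqF // powRr1.
Qed.

Lemma col_moment_le_max_col_dot {R : realType} {m N : nat} (A : 'M[R]_(m, N)) q w :
  0 < q -> col_moment A q w <= max_col_dot A w.
Proof.
move=> q_gt0; apply: powR_mean_le => // [|i]; first exact: max_col_dot_ge0.
by rewrite normr_ge0 le_max_col_dot.
Qed.

Lemma dual_norm_le_max_col_dot {R : realType} {m N : nat} {A : 'M[R]_(m, N)}
    {nrm : 'cV[R]_m -> R} {q c : R} :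
  is_norm nrm -> 0 < q ->
  c <= inf [set col_moment A q w | w in [set w | dual_norm nrm w = 1]] ->
  forall r, r != 0 -> c * dual_norm nrm r <= max_col_dot A r.
Proof.
move=> nrmP q_gt0 c_le r r0; have d_gt0 := dual_norm_gt0 nrmP _ r0.
set v := (dual_norm nrm r)^-1 *: r.
have v_unit : dual_norm nrm v = 1 by rewrite dual_normZ ?invr_gt0 // mulVf ?gt_eqF.
have inf_le : inf [set col_moment A q w | w in [set w | dual_norm nrm w = 1]] <= col_moment A q v.
  apply: ge_inf; last by exists v.
  by exists 0 => _ [z _ <-]; apply: powR_ge0.
have := le_trans c_le (le_trans inf_le (col_moment_le_max_col_dot A q v q_gt0)).
by rewrite max_col_dotZr ?invr_ge0 ?(ltW d_gt0) // ler_pdivlMl // mulrC.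
Qed.

Theorem lemma4p4 (R : realType) (m N : nat) (A : 'M[R]_(m, N))
  (nrm : 'cV[R]_m -> R) (D : R) :
  (0 < m)%N -> (2 <= N)%N ->
  (m%:R <= expR 1 * N%:R :> R) ->
  is_norm nrm -> 0 < D ->
  inf [set col_moment A (ln N%:R) w | w in [set w | dual_norm nrm w = 1]]
    >= D^-1 * Num.sqrt (ln (expR 1 * N%:R / m%:R)) ->
  l1_quotient_property ((Num.sqrt m%:R)^-1 *: A) D nrm.
Proof.
move=> m_gt0 N_ge2 m_le nrmP D_gt0 inf_ge w.
have q_gt0 : 0 < ln N%:R :> R by rewrite ln_gt0 // ltr1n.
have m_gt0' : 0 < m%:R :> R by rewrite ltr0n.
set L := ln (expR 1 * N%:R / m%:R) in inf_ge *.
have L_gt0 : 0 < L.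
  rewrite ln_gt0 // ltr_pdivlMr // mul1r lt_neqAle m_le andbT eq_sym.
  by rewrite expR1_mul_nat_neq_nat // (leq_trans _ N_ge2).
set c := D^-1 * Num.sqrt L / Num.sqrt m%:R.
have c_gt0 : 0 < c by rewrite !(mulr_gt0, invr_gt0, sqrtr_gt0).
have dual_le r : r != 0 -> c * dual_norm nrm r <= max_col_dot ((Num.sqrt m%:R)^-1 *: A) r.
  move=> r0; rewrite max_col_dotZl ?invr_ge0 ?sqrtr_ge0 //.
  have -> : c * dual_norm nrm r = (Num.sqrt m%:R)^-1 * (D^-1 * Num.sqrt L * dual_norm nrm r).
    by rewrite /c; ring.
  apply: ler_wpM2l; first by rewrite invr_ge0 sqrtr_ge0.
  exact: (dual_norm_le_max_col_dot nrmP q_gt0 inf_ge).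
have [u [Au u_le]] := l1_quotient_of_dual_bound nrmP c_gt0 dual_le w.
exists u; split => //; suff -> : D * Num.sqrt (s_star R m N) = c^-1 by [].
rewrite /s_star -/L sqrtrM ?ler0n // sqrtrV ?ltW // /c.
field; rewrite ?gt_eqF ?sqrtr_gt0 //.
Qed.
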